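(* (1) For every $\phi\in\mathcal{L}_{\Box\!\!\rightarrow}$, if $\phi\in\mathsf{N4CK}$, then $\phi\in\mathsf{CK}$. (2) The classical system $\mathbb{CK}$ (axiomatizing $\mathsf{CK}$) and the system $\mathbb{N}4\mathbb{CK}$ extended with the axiom schemes $\phi\to(\sim\phi\to\psi)$ and $\phi\vee\sim\phi$ generate the same logic over $\mathcal{L}_{\Box\!\!\rightarrow}$ when both are closed under the operation $^\iota$.
   Context: $\mathcal{L}_{\Box\!\!\rightarrow}$ is built from propositional variables with $\wedge,\vee,\to$, negation $\sim$, and a binary would-conditional $\Box\!\!\rightarrow$; $\phi\Diamond\!\!\rightarrow\psi$ abbreviates $\sim(\phi\Box\!\!\rightarrow\sim\psi)$. Abbreviations: $\leftrightarrow$ is mutual $\to$; $\phi\Rightarrow\psi:=(\phi\to\psi)\wedge(\sim\psi\to\sim\phi)$; $\phi\Leftrightarrow\psi:=(\phi\Rightarrow\psi)\wedge(\psi\Rightarrow\phi)$. Consider the axioms (A1) $((\phi\Box\!\!\rightarrow\psi)\wedge(\phi\Box\!\!\rightarrow\chi))\Leftrightarrow(\phi\Box\!\!\rightarrow(\psi\wedge\chi))$; (A2) $(\sim(\phi\Box\!\!\rightarrow\psi)\wedge(\phi\Box\!\!\rightarrow\chi))\to\sim(\phi\Box\!\!\rightarrow(\psi\vee\sim\chi))$; (A3) $((\phi\Diamond\!\!\rightarrow\psi)\to(\phi\Box\!\!\rightarrow\chi))\to(\phi\Box\!\!\rightarrow(\psi\to\chi))$; (A4) $\phi\Box\!\!\rightarrow(\psi\to\psi)$;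 and rules (RA) from $\phi\Leftrightarrow\psi$ infer $(\phi\Box\!\!\rightarrow\chi)\Leftrightarrow(\psi\Box\!\!\rightarrow\chi)$; (RC1) from $\phi\leftrightarrow\psi$ infer $(\chi\Box\!\!\rightarrow\phi)\leftrightarrow(\chi\Box\!\!\rightarrow\psi)$; (RC2) from $\sim\phi\leftrightarrow\sim\psi$ infer $\sim(\chi\Box\!\!\rightarrow\phi)\leftrightarrow\sim(\chi\Box\!\!\rightarrow\psi)$. $\mathbb{N}4\mathbb{CK}$ = modus ponens + positive intuitionistic schemes + $\sim\sim\phi\leftrightarrow\phi$, $\sim(\phi\wedge\psi)\leftrightarrow(\sim\phi\vee\sim\psi)$, $\sim(\phi\vee\psi)\leftrightarrow(\sim\phi\wedge\sim\psi)$, $\sim(\phi\to\psi)\leftrightarrow(\phi\wedge\sim\psi)$ + (A1)–(A4) + (RA),(RC1),(RC2); it is sound and complete for $\mathsf{N4CK}$, the paraconsistent Nelsonian conditional logic. $\mathsf{CK}$ is Chellas' basic classical conditional logic, axiomatized by $\mathbb{CK}$ := classical propositional logic (with $\sim$ as classical negation) + (A1), (A4), (RA), (RC1). For a system $\mathbb{S}$, $\Gamma\vdash_\mathbb{S}\Delta$ means some nonempty finite disjunction of members of $\Delta$ is derivable from $\Gamma$ and theorems by modus ponens, and $\mathbb{S}^\iota[\mathcal{L}_{\Box\!\!\rightarrow}]$ is the resulting relation extended by all pairs $(\Gamma,\emptyset)$ such that $\Gamma\vdash_\mathbb{S}p_1\wedge\sim p_1$. *)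

From Stdlib Require Import List.
Import ListNotations.

Inductive form : Type :=
| Var : nat -> form
| And : form -> form -> form
| Or : form -> form -> form
| Imp : form -> form -> form
| Neg : form -> form
| Cond : form -> form -> form.

Definition Iff (a b : form) : form := And (Imp a b) (Imp b a).
Definition SImp (a b : form) : form := And (Imp a b) (Imp (Neg b) (Neg a)).
Definition SIff (a b : form) : form := And (SImp a b) (SImp b a).
Definition MCond (a b : form) : form := Neg (Cond a (Neg b)).

Inductive PosInt : form -> Prop :=
| PI1 a b : PosInt (Imp a (Imp b a))
| PI2 a b c : PosInt (Imp (Imp a (Imp b c)) (Imp (Imp a b) (Imp a c)))
| PI3 a b : PosInt (Imp (And a b) a)
| PI4 a b : PosInt (Imp (And a b) b)
| PI5 a b : PosInt (Imp a (Imp b (And a b)))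
| PI6 a b : PosInt (Imp a (Or a b))
| PI7 a b : PosInt (Imp b (Or a b))
| PI8 a b c : PosInt (Imp (Imp a c) (Imp (Imp b c) (Imp (Or a b) c))).

Inductive NegAx : form -> Prop :=
| NA1 a : NegAx (Iff (Neg (Neg a)) a)
| NA2 a b : NegAx (Iff (Neg (And a b)) (Or (Neg a) (Neg b)))
| NA3 a b : NegAx (Iff (Neg (Or a b)) (And (Neg a) (Neg b)))
| NA4 a b : NegAx (Iff (Neg (Imp a b)) (And a (Neg b))).

(** Classical propositional logic: all instances of classical tautologies,
    treating variables and conditionals as atoms and ~ as classical negation. *)
Fixpoint ceval (v : form -> bool) (f : form) : bool :=
  match f with
  | Var _ => v f
  | Cond _ _ => v f
  | And a b => andb (ceval v a) (ceval v b)
  | Or a b => orb (ceval v a) (ceval v b)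
  | Imp a b => implb (ceval v a) (ceval v b)
  | Neg a => negb (ceval v a)
  end.
Definition Taut (f : form) : Prop := forall v, ceval v f = true.

Definition A1 a b c : form :=
  SIff (And (Cond a b) (Cond a c)) (Cond a (And b c)).
Definition A2 a b c : form :=
  Imp (And (Neg (Cond a b)) (Cond a c)) (Neg (Cond a (Or b (Neg c)))).
Definition A3 a b c : form :=
  Imp (Imp (MCond a b) (Cond a c)) (Cond a (Imp b c)).
Definition A4 a b : form := Cond a (Imp b b).

Inductive ThmN4CK (ext : bool) : form -> Prop :=
| N_pos f : PosInt f -> ThmN4CK ext f
| N_neg f : NegAx f -> ThmN4CK ext f
| N_A1 a b c : ThmN4CK ext (A1 a b c)
| N_A2 a b c : ThmN4CK ext (A2 a b c)
| N_A3 a b c : ThmN4CK ext (A3 a b c)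
| N_A4 a b : ThmN4CK ext (A4 a b)
| N_efq a b : ext = true -> ThmN4CK ext (Imp a (Imp (Neg a) b))
| N_lem a : ext = true -> ThmN4CK ext (Or a (Neg a))
| N_MP a b : ThmN4CK ext (Imp a b) -> ThmN4CK ext a -> ThmN4CK ext b
| N_RA a b c : ThmN4CK ext (SIff a b) ->
    ThmN4CK ext (SIff (Cond a c) (Cond b c))
| N_RC1 a b c : ThmN4CK ext (Iff a b) ->
    ThmN4CK ext (Iff (Cond c a) (Cond c b))
| N_RC2 a b c : ThmN4CK ext (Iff (Neg a) (Neg b)) ->
    ThmN4CK ext (Iff (Neg (Cond c a)) (Neg (Cond c b))).

Inductive ThmCK : form -> Prop :=
| C_taut f : Taut f -> ThmCK f
| C_A1 a b c : ThmCK (A1 a b c)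
| C_A4 a b : ThmCK (A4 a b)
| C_MP a b : ThmCK (Imp a b) -> ThmCK a -> ThmCK b
| C_RA a b c : ThmCK (SIff a b) -> ThmCK (SIff (Cond a c) (Cond b c))
| C_RC1 a b c : ThmCK (Iff a b) -> ThmCK (Iff (Cond c a) (Cond c b)).

Definition N4CK_sys : form -> Prop := ThmN4CK false.
Definition N4CKext_sys : form -> Prop := ThmN4CK true.
Definition CK_sys : form -> Prop := ThmCK.

Inductive Deriv (Thm : form -> Prop) (G : form -> Prop) : form -> Prop :=
| D_hyp f : G f -> Deriv Thm G f
| D_thm f : Thm f -> Deriv Thm G f
| D_MP a b : Deriv Thm G (Imp a b) -> Deriv Thm G a -> Deriv Thm G b.

Fixpoint bigOr (d : form) (l : list form) : form :=
  match l with
  | [] => d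
  | e :: l' => Or d (bigOr e l')
  end.

(** Gamma |-_S Delta : some nonempty finite disjunction of members of Delta
    is derivable from Gamma. *)
Definition Cons (Thm : form -> Prop) (G D : form -> Prop) : Prop :=
  exists (d : form) (l : list form),
    D d /\ (forall e, In e l -> D e) /\ Deriv Thm G (bigOr d l).

Definition p1 : form := Var 1.
Definition ConsIota (Thm : form -> Prop) (G D : form -> Prop) : Prop :=
  Cons Thm G D \/
  ((forall x, ~ D x) /\ Deriv Thm G (And p1 (Neg p1))).

Definition InLogic (Thm : form -> Prop) (f : form) : Prop :=
  Deriv Thm (fun _ => False) f.

From Stdlib Require Import List.
Import ListNotations.

(* Reading ~ classically, every axiom of N4CK (even with the two extra schemes)
   is a theorem of CK: the propositional axioms are tautologies, A2 and A3
   follow from A1 through the derived monotonicity rule, and RC2 collapses to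
   RC1.  Conversely, once phi -> (~phi -> psi) and phi \/ ~phi are available,
   Kalmar's argument shows that every classical tautology is a theorem: the
   strong-negation axioms push ~ down to the atoms, so each formula or its
   strong negation follows from the literals of its atoms, and excluded middle
   discharges these literals one by one.  The two systems therefore have the
   same theorems, hence the same consequence relations. *)

Ltac prove_taut :=
  cbv [Taut Iff SIff MCond A1 A2 A3 A4];
  let v := fresh "v" in
  intro v; simpl;
  repeat match goal with
  | |- context [ceval v ?x] => destruct (ceval v x)
  | |- context [v ?x] => destruct (v x)
  end; reflexivity.

Lemma Deriv_mono (T1 T2 G1 G2 : form -> Prop) f :
  (forall x, T1 x -> T2 x) -> (forall x, G1 x -> G2 x) ->
  Deriv T1 G1 f -> Deriv T2 G2 f.
Proof.
  intros HT HG D; induction D.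
  - apply D_hyp; auto.
  - apply D_thm; auto.
  - eapply D_MP; eauto.
Qed.

Lemma InLogic_thm (Thm : form -> Prop) f :
  (forall a b, Thm (Imp a b) -> Thm a -> Thm b) -> InLogic Thm f -> Thm f.
Proof.
  intros Hmp D; induction D as [f []| |]; eauto.
Qed.

Lemma ConsIota_mono (T1 T2 G D : form -> Prop) :
  (forall x, T1 x -> T2 x) -> ConsIota T1 G D -> ConsIota T2 G D.
Proof.
  intros HT [[d [l [Hd [Hl HG]]]] | [HD HG]].
  - left; exists d, l; split; [|split]; auto.
    eapply Deriv_mono; [exact HT | | exact HG]; auto.
  - right; split; auto.
    eapply Deriv_mono; [exact HT | | exact HG]; auto.
Qed.

Lemma ThmCK_taut_mp h g : ThmCK h -> Taut (Imp h g) -> ThmCK g.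
Proof. intros H Ht; exact (C_MP _ _ (C_taut _ Ht) H). Qed.

Lemma ThmCK_taut_mp2 h1 h2 g :
  ThmCK h1 -> ThmCK h2 -> Taut (Imp h1 (Imp h2 g)) -> ThmCK g.
Proof. intros H1 H2 Ht; exact (C_MP _ _ (ThmCK_taut_mp _ _ H1 Ht) H2). Qed.

Lemma ThmCK_taut_mp3 h1 h2 h3 g :
  ThmCK h1 -> ThmCK h2 -> ThmCK h3 -> Taut (Imp h1 (Imp h2 (Imp h3 g))) -> ThmCK g.
Proof. intros H1 H2 H3 Ht; exact (C_MP _ _ (ThmCK_taut_mp2 _ _ _ H1 H2 Ht) H3). Qed.

Lemma ThmCK_Cond_mono a x y :
  ThmCK (Imp x y) -> ThmCK (Imp (Cond a x) (Cond a y)).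
Proof.
  intro Hxy.
  assert (Hx : ThmCK (Iff x (And x y))) by (eapply ThmCK_taut_mp; [exact Hxy | prove_taut]).
  eapply ThmCK_taut_mp2; [exact (C_RC1 _ _ a Hx) | exact (C_A1 a x y) | prove_taut].
Qed.

Lemma ThmCK_A2 a b c : ThmCK (A2 a b c).
Proof.
  assert (Hcb : ThmCK (Iff (Cond a (And c (Or b (Neg c)))) (Cond a (And b c)))).
  { apply C_RC1, C_taut; prove_taut. }
  eapply ThmCK_taut_mp3;
    [exact (C_A1 a c (Or b (Neg c))) | exact Hcb | exact (C_A1 a b c) | prove_taut].
Qed.

Lemma ThmCK_A3 a b c : ThmCK (A3 a b c).
Proof.
  assert (Hnb : ThmCK (Imp (Cond a (Neg b)) (Cond a (Imp b c)))).
  { apply ThmCK_Cond_mono, C_taut; prove_taut. }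
  assert (Hc : ThmCK (Imp (Cond a c) (Cond a (Imp b c)))).
  { apply ThmCK_Cond_mono, C_taut; prove_taut. }
  eapply ThmCK_taut_mp2; [exact Hnb | exact Hc | prove_taut].
Qed.

Lemma ThmN4CK_ThmCK ext f : ThmN4CK ext f -> ThmCK f.
Proof.
  intro H; induction H.
  - apply C_taut; destruct H; prove_taut.
  - apply C_taut; destruct H; prove_taut.
  - apply C_A1.
  - apply ThmCK_A2.
  - apply ThmCK_A3.
  - apply C_A4.
  - apply C_taut; prove_taut.
  - apply C_taut; prove_taut.
  - eapply C_MP; eauto.
  - apply C_RA; auto.
  - apply C_RC1; auto.
  - assert (Hab : ThmCK (Iff a b)) by (eapply ThmCK_taut_mp; [eassumption | prove_taut]).
    eapply ThmCK_taut_mp; [exact (C_RC1 _ _ c Hab) | prove_taut].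
Qed.

Fixpoint atoms (f : form) : list form :=
  match f with
  | Var _ | Cond _ _ => [f]
  | And a b | Or a b | Imp a b => atoms a ++ atoms b
  | Neg a => atoms a
  end.

Definition signed (b : bool) (f : form) : form := if b then f else Neg f.

Definition literals (v : form -> bool) (K : list form) (x : form) : Prop :=
  exists q, In q K /\ x = signed (v q) q.

Section Kalmar.

Variable Thm : form -> Prop.
Hypothesis Thm_pos : forall f, PosInt f -> Thm f.
Hypothesis Thm_neg : forall f, NegAx f -> Thm f.
Hypothesis Thm_efq : forall a b, Thm (Imp a (Imp (Neg a) b)).
Hypothesis Thm_lem : forall a, Thm (Or a (Neg a)).

Lemma Deriv_PosInt G f : PosInt f -> Deriv Thm G f.
Proof. intro H; exact (D_thm _ _ _ (Thm_pos _ H)). Qed.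

Lemma Deriv_NegAx_rev G x y : NegAx (Iff x y) -> Deriv Thm G (Imp y x).
Proof.
  intro H; eapply D_MP; [apply Deriv_PosInt, PI4 | apply D_thm, Thm_neg, H].
Qed.

Lemma Deriv_imp_refl G a : Deriv Thm G (Imp a a).
Proof.
  eapply D_MP; [eapply D_MP; [apply Deriv_PosInt, (PI2 a (Imp a a) a) | apply Deriv_PosInt, PI1] |].
  apply Deriv_PosInt, (PI1 a a).
Qed.

Lemma Deriv_deduction G a b :
  Deriv Thm (fun x => x = a \/ G x) b -> Deriv Thm G (Imp a b).
Proof.
  intro D; induction D as [x [->|Hx]| |].
  - apply Deriv_imp_refl.
  - eapply D_MP; [apply Deriv_PosInt, PI1 | apply D_hyp; exact Hx].
  - eapply D_MP; [apply Deriv_PosInt, PI1 | apply D_thm; assumption].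
  - eapply D_MP; [eapply D_MP; [apply Deriv_PosInt, PI2 |] |]; eassumption.
Qed.

Lemma Deriv_signed_ceval v f K :
  incl (atoms f) K -> Deriv Thm (literals v K) (signed (ceval v f) f).
Proof.
  revert K; induction f as [n|f1 IH1 f2 IH2|f1 IH1 f2 IH2|f1 IH1 f2 IH2|f IH|f1 _ f2 _];
    intros K HK; simpl in HK.
  - apply D_hyp; exists (Var n); split; [apply HK; left |]; reflexivity.
  - apply incl_app_inv in HK as [H1 H2].
    assert (A := IH1 K H1); assert (B := IH2 K H2); simpl.
    destruct (ceval v f1), (ceval v f2); simpl in *.
    + eapply D_MP; [eapply D_MP; [apply Deriv_PosInt, PI5 |] |]; eassumption.
    + eapply D_MP; [apply Deriv_NegAx_rev, NA2 |].
      eapply D_MP; [apply Deriv_PosInt, PI7 | exact B].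
    + eapply D_MP; [apply Deriv_NegAx_rev, NA2 |].
      eapply D_MP; [apply Deriv_PosInt, PI6 | exact A].
    + eapply D_MP; [apply Deriv_NegAx_rev, NA2 |].
      eapply D_MP; [apply Deriv_PosInt, PI6 | exact A].
  - apply incl_app_inv in HK as [H1 H2].
    assert (A := IH1 K H1); assert (B := IH2 K H2); simpl.
    destruct (ceval v f1), (ceval v f2); simpl in *.
    + eapply D_MP; [apply Deriv_PosInt, PI6 | exact A].
    + eapply D_MP; [apply Deriv_PosInt, PI6 | exact A].
    + eapply D_MP; [apply Deriv_PosInt, PI7 | exact B].
    + eapply D_MP; [apply Deriv_NegAx_rev, NA3 |].
      eapply D_MP; [eapply D_MP; [apply Deriv_PosInt, PI5 |] |]; eassumption.
  - apply incl_app_inv in HK as [H1 H2].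
    assert (A := IH1 K H1); assert (B := IH2 K H2); simpl.
    destruct (ceval v f1), (ceval v f2); simpl in *.
    + eapply D_MP; [apply Deriv_PosInt, PI1 | exact B].
    + eapply D_MP; [apply Deriv_NegAx_rev, NA4 |].
      eapply D_MP; [eapply D_MP; [apply Deriv_PosInt, PI5 |] |]; eassumption.
    + eapply D_MP; [apply Deriv_PosInt, PI1 | exact B].
    + eapply D_MP; [eapply D_MP; [apply Deriv_PosInt, (PI2 f1 (Neg f1) f2) | apply D_thm, Thm_efq] |].
      eapply D_MP; [apply Deriv_PosInt, PI1 | exact A].
  - assert (A := IH K HK); simpl.
    destruct (ceval v f); simpl in *; [| exact A].
    eapply D_MP; [apply Deriv_NegAx_rev, NA1 | exact A].
  - apply D_hyp; exists (Cond f1 f2); split; [apply HK; left |]; reflexivity.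
Qed.

Definition form_eq_dec : forall x y : form, {x = y} + {x <> y}.
Proof. decide equality; apply PeanoNat.Nat.eq_dec. Defined.

Definition update (v : form -> bool) (p : form) (b : bool) : form -> bool :=
  fun x => if form_eq_dec x p then b else v x.

Lemma literals_update v p b K x :
  literals (update v p b) (p :: K) x -> x = signed b p \/ literals v K x.
Proof.
  intros [q [[<- | Hq] ->]]; unfold update.
  - left; destruct (form_eq_dec p p); [reflexivity | congruence].
  - destruct (form_eq_dec q p) as [-> | Hqp].
    + left; reflexivity.
    + right; exists q; auto.
Qed.

Lemma InLogic_of_literals f K :
  (forall v, Deriv Thm (literals v K) f) -> InLogic Thm f.
Proof.
  induction K as [|p K IH]; intro Hf.
  - eapply Deriv_mono; [| | apply (Hf (fun _ => true))]; auto.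
    intros x [q [[] _]].
  - apply IH; intro v.
    assert (Hsigned : forall b, Deriv Thm (literals v K) (Imp (signed b p) f)).
    { intro b; apply Deriv_deduction.
      eapply Deriv_mono; [| | apply (Hf (update v p b))]; auto.
      apply literals_update. }
    eapply D_MP; [eapply D_MP; [eapply D_MP; [apply Deriv_PosInt, PI8 |] |] |].
    + exact (Hsigned true).
    + exact (Hsigned false).
    + apply D_thm, Thm_lem.
Qed.

Lemma InLogic_taut f : Taut f -> InLogic Thm f.
Proof.
  intro Ht; apply (InLogic_of_literals f (atoms f)); intro v.
  assert (Hv := Deriv_signed_ceval v f (atoms f) (incl_refl _)).
  rewrite (Ht v) in Hv; exact Hv.
Qed.

End Kalmar.

Lemma ThmCK_ThmN4CK_ext f : ThmCK f -> ThmN4CK true f.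
Proof.
  intro H; induction H.
  - apply InLogic_thm; [intros; eapply N_MP; eassumption |].
    apply InLogic_taut; auto.
    + intros; apply N_pos; assumption.
    + intros; apply N_neg; assumption.
    + intros; apply N_efq; reflexivity.
    + intros; apply N_lem; reflexivity.
  - apply N_A1.
  - apply N_A4.
  - eapply N_MP; eassumption.
  - apply N_RA; assumption.
  - apply N_RC1; assumption.
Qed.

Theorem proposition8 :
  (forall phi : form, InLogic N4CK_sys phi -> InLogic CK_sys phi) /\
  (forall G D : form -> Prop,
      ConsIota CK_sys G D <-> ConsIota N4CKext_sys G D).
Proof.
  split.
  - intros phi H; eapply Deriv_mono; [| | exact H]; auto.
    apply ThmN4CK_ThmCK.
  - intros G D; split; apply ConsIota_mono.
    + apply ThmCK_ThmN4CK_ext.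
    + apply ThmN4CK_ThmCK.
Qed.
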